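(* Under the hypotheses of the previous setting (nonzero $\mathsf k_1,\mathsf k_2,\mathsf k_3$, a Bethe solution with pairwise distinct roots $\lambda_l\ne\lambda_m$, $\mu_p\ne\mu_q$, $\mu_q\ne\lambda_m$ and $\{\mu_h\}\cap\{\xi_n\}=\emptyset$), let $t_1(\lambda)=t_1(\lambda|\{\lambda_j\},\{\mu_h\})$, $x_a=t_1(\xi_a)$, and let $t^{(m)}_n(\lambda)=t^{(m)}_n(\lambda|\{x_a\})$ be the associated fused polynomials. Then the null out-boundary conditions $t^{(2+n)}_{3+m}(\lambda)=0$ hold for all $\lambda\in\mathbb C$ and all integers $n,m\ge0$, and the inner-boundary condition $\mathsf k_2\mathsf k_3\,d(\lambda)\,t_3(\lambda)=\mathsf k_1\,t^{(2)}_2(\lambda+\eta)$ holds for all $\lambda\in\mathbb C$; equivalently $\mathsf k_2\mathsf k_3d(\lambda)t_3(\lambda)=\mathsf k_1\big(t_2(\lambda)t_2(\lambda+\eta)-t_3(\lambda)t_1(\lambda+\eta)\big)$.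
   Context: Fix a nonzero complex number $\eta$, an integer $\mathsf N\ge1$ and complex inhomogeneities $\xi_1,\dots,\xi_{\mathsf N}$ with $\xi_a-\xi_b\notin\eta\mathbb Z$ for $a\ne b$. This concerns the fundamental $gl_{1|2}$ model with diagonal twist $K=\operatorname{diag}(\mathsf k_1,\mathsf k_2,\mathsf k_3)$. Write $d(\lambda)=\prod_{n=1}^{\mathsf N}(\lambda-\xi_n)$, $a(\lambda)=d(\lambda+\eta)$, and $f^{(m)}_a(\lambda)=\prod_{b\ne a}\frac{\lambda-\xi_b}{\xi_a-\xi_b}\prod_{b=1}^{\mathsf N}\prod_{r=1}^{m-1}\frac{1}{\xi_a-\xi_b+r\eta}$. Let $T_{\infty,1}=\mathsf k_1-\mathsf k_2-\mathsf k_3$ and $T_{\infty,n}=\mathsf k_1^{n-2}(\mathsf k_1-\mathsf k_2)(\mathsf k_1-\mathsf k_3)$ for $n\ge2$. Interpolation polynomials in unknowns $\{x_a\}$: $t_1(\lambda|\{x_a\})=T_{\infty,1}d(\lambda)+\sum_af^{(1)}_a(\lambda)x_a$ and, for $n\ge1$, $t_{n+1}(\lambda|\{x_a\})=\prod_{r=1}^nd(\lambda+r\eta)\big[T_{\infty,n+1}d(\lambda)+\sum_af^{(n+1)}_a(\lambda)t_n(\xi_a+\eta|\{x_a\})x_a\big]$. Fused polynomials: $t^{(m)}_n(\lambda|\{x_a\})=\det_{1\le i,j\le m}t_{n+i-j}(\lambda-(i-1)\eta|\{x_a\})$ with $t_0\equiv1$, $t_k\equiv0$ for $k<0$. Bethe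 Ansatz: $Q_1(\lambda)=\prod_{l=1}^L(\lambda-\lambda_l)$, $Q_2(\lambda)=\prod_{m=1}^M(\lambda-\mu_m)$; Bethe equations: $\mathsf k_1Q_2(\lambda_j)a(\lambda_j)=\mathsf k_2d(\lambda_j)Q_2(\lambda_j+\eta)$ ($j\le L$) and $\mathsf k_2Q_2(\mu_j+\eta)Q_1(\mu_j-\eta)=-\mathsf k_3Q_2(\mu_j-\eta)Q_1(\mu_j)$ ($j\le M$). Define $\Lambda_1(\lambda)=\mathsf k_1a(\lambda)\frac{Q_1(\lambda-\eta)}{Q_1(\lambda)}$, $\Lambda_2(\lambda)=\mathsf k_2d(\lambda)\frac{Q_1(\lambda-\eta)Q_2(\lambda+\eta)}{Q_1(\lambda)Q_2(\lambda)}$, $\Lambda_3(\lambda)=\mathsf k_3d(\lambda)\frac{Q_2(\lambda-\eta)}{Q_2(\lambda)}$, and $t_1(\lambda|\{\lambda_j\},\{\mu_h\})=\Lambda_1(\lambda)-\Lambda_2(\lambda)-\Lambda_3(\lambda)$. *)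

(* The base field C is modelled by an arbitrary
   numClosedFieldType (algebraically closed, characteristic 0, e.g. C). *)
From HB Require Import structures.
From mathcomp Require Import all_boot all_order all_algebra.
Set Implicit Arguments. Unset Strict Implicit. Unset Printing Implicit Defensive.
Import Order.TTheory GRing.Theory Num.Theory.
Local Open Scope ring_scope.

Section Gl12.
Variable R : numClosedFieldType.
Variable N : nat.
Variable xi : 'I_N -> R.
Variable eta : R.
Variables k1 k2 k3 : R.

Definition dfun (l : R) : R := \prod_(n < N) (l - xi n).
Definition afun (l : R) : R := dfun (l + eta).

Definition ffun (m : nat) (a : 'I_N) (l : R) : R :=
  (\prod_(b < N | b != a) ((l - xi b) / (xi a - xi b))) *
  \prod_(b < N) \prod_(1 <= r < m) (xi a - xi b + r%:R * eta)^-1.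

(* T_{infty,n}; only used for n >= 1 *)
Definition Tinf (n : nat) : R :=
  match n with
  | 0 => 0
  | 1 => k1 - k2 - k3
  | n'.+2 => k1 ^+ n' * (k1 - k2) * (k1 - k3)
  end.

Fixpoint tpol (x : 'I_N -> R) (n : nat) (l : R) : R :=
  match n with
  | 0 => 1
  | n'.+1 =>
      (\prod_(1 <= r < n'.+1) dfun (l + r%:R * eta)) *
      (Tinf n'.+1 * dfun l +
       \sum_(a < N) ffun n'.+1 a l * tpol x n' (xi a + eta) * x a)
  end.

Definition tpolZ (x : 'I_N -> R) (k : int) (l : R) : R :=
  match k with
  | Posz n => tpol x n l
  | Negz _ => 0
  end.

(* fused polynomials t^(m)_n(l) = det_{1<=i,j<=m} t_{n+i-j}(l - (i-1) eta)
   (written with 0-based indices i, j < m) *)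
Definition tfused (x : 'I_N -> R) (m : nat) (n : nat) (l : R) : R :=
  \det (\matrix_(i < m, j < m)
          tpolZ x (n%:Z + i%:Z - j%:Z) (l - i%:R * eta)).

Definition Qpol (k : nat) (roots : 'I_k -> R) (l : R) : R :=
  \prod_(j < k) (l - roots j).

Definition t1Bethe (L M : nat) (lam : 'I_L -> R) (mu : 'I_M -> R) (l : R) : R :=
  let Q1 := Qpol lam in let Q2 := Qpol mu in
  k1 * afun l * Q1 (l - eta) / Q1 l
  - k2 * dfun l * Q1 (l - eta) * Q2 (l + eta) / (Q1 l * Q2 l)
  - k3 * dfun l * Q2 (l - eta) / Q2 l.

Definition bethe_eqs (L M : nat) (lam : 'I_L -> R) (mu : 'I_M -> R) : Prop :=
  let Q1 := Qpol lam in let Q2 := Qpol mu in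
  (forall j : 'I_L,
      k1 * Q2 (lam j) * afun (lam j) = k2 * dfun (lam j) * Q2 (lam j + eta)) /\
  (forall j : 'I_M,
      k2 * Q2 (mu j + eta) * Q1 (mu j - eta) = - (k3 * Q2 (mu j - eta) * Q1 (mu j))).

End Gl12.

(* The proof makes the interpolation
   polynomials t_n(l|{x_a}) explicit.  The Bethe equations give exact polynomial divisions
     V = (Q1(l - eta) U(l) - k3 d(l) Q2(l - eta)) / Q2(l),
         U = (k1 d(l + eta) Q2(l) - k2 d(l) Q2(l + eta)) / Q1(l),
     W = (k1 V(l + eta) + k2 k3 d(l)) / Q1(l),
   where V is the polynomial form of t1.  With G_1 = V and
   G_(n+2)(l) = k1^n Q1(l - eta) W(l + n eta), every G_n has leading term T_{infty,n} l^N,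
   and its values at the nodes obey the recursion that defines t_n; Lagrange interpolation
   on the N nodes therefore yields the closed form
     t_n(l) = prod_(1<=r<n) d(l + r eta) G_n(l).
   In this form two consecutive rows of the fused determinant t^(2+n)_(3+m) are multiples
   of a common row, so it vanishes; the inner boundary condition reduces to the defining
   identity of W. *)

From HB Require Import structures.
From mathcomp Require Import all_boot all_order all_algebra.
From mathcomp Require Import zify ring.
Set Implicit Arguments. Unset Strict Implicit. Unset Printing Implicit Defensive.
Import Order.TTheory GRing.Theory Num.Theory.
Local Open Scope ring_scope.

Section LeadingTerm.
Variable R : fieldType.
Implicit Types p q : {poly R}.

(* [leads p c k]: p = c X^k + (terms of degree < k); the coefficient c may be 0. *)
Definition leads p (c : R) (k : nat) := (size (p - c *: 'X^k)%R <= k)%N.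

Lemma leads_sizeE p c k : c != 0 -> leads p c k -> size p = k.+1.
Proof.
move=> c0 h; rewrite -(addrNK (c *: 'X^k) p) addrC.
by rewrite size_polyDl size_scale ?size_polyXn.
Qed.

Lemma leadsD p q c c' k : leads p c k -> leads q c' k -> leads (p + q) (c + c') k.
Proof.
rewrite /leads scalerDl => hp hq.
rewrite opprD addrACA; apply: leq_trans (size_polyD _ _) _.
by rewrite geq_max hp hq.
Qed.

Lemma leadsZ p c k a : leads p c k -> leads (a *: p) (a * c) k.
Proof.
by rewrite /leads -scalerA -scalerBr => h; apply: leq_trans (size_scale_leq _ _) h.
Qed.

Lemma leadsB p q c c' k : leads p c k -> leads q c' k -> leads (p - q) (c - c') k.
Proof.
move=> hp /(leadsZ (-1)); rewrite scaleN1r mulN1r; exact: leadsD.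
Qed.

Lemma leadsM p q c c' k k' : leads p c k -> leads q c' k' ->
  leads (p * q) (c * c') (k + k').
Proof.
rewrite /leads => hp hq.
set e := p - c *: 'X^k in hp *; set e' := q - c' *: 'X^k' in hq *.
have small (u v : {poly R}) m n :
    (size u <= m)%N -> (size v <= n)%N -> (size (u * v)%R <= (m + n).-1)%N.
  by move=> hu hv; apply: leq_trans (size_polyMleq _ _) _; lia.
have sX b n : (size (b *: 'X^n : {poly R}) <= n.+1)%N.
  by apply: leq_trans (size_scale_leq _ _) _; rewrite size_polyXn.
have -> : p * q - (c * c') *: 'X^(k + k') =
    (c *: 'X^k) * e' + e * (c' *: 'X^k') + e * e'.
  by rewrite /e /e' exprD -!mul_polyC polyCM; ring.
apply: leq_trans (size_polyD _ _) _; rewrite geq_max.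
apply/andP; split; last by apply: leq_trans (small _ _ _ _ hp hq) _; lia.
apply: leq_trans (size_polyD _ _) _; rewrite geq_max.
apply/andP; split.
  by apply: leq_trans (small _ _ _ _ (sX c k) hq) _; lia.
by apply: leq_trans (small _ _ _ _ hp (sX c' k')) _; lia.
Qed.

Lemma leads_cancel p q c c' m k : c' != 0 ->
  leads (q * p) c (m + k) -> leads q c' m -> leads p (c / c') k.
Proof.
move=> c0 h hq; have sq := leads_sizeE c0 hq.
rewrite /leads in h hq *; set e := p - (c / c') *: 'X^k.
have he : (size (q * e)%R <= m + k)%N.
  have -> : q * e = (q * p - c *: 'X^(m + k)) - (c / c') *: ((q - c' *: 'X^m) * 'X^k).
    rewrite /e exprD -!mul_polyC -{2}(mulfVK c0 c) polyCM; ring.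
  apply: leq_trans (size_polyD _ _) _; rewrite size_polyN geq_max h /=.
  apply: leq_trans (size_scale_leq _ _) _.
  by apply: leq_trans (size_polyMleq _ _) _; rewrite size_polyXn; lia.
have [->|e0] := eqVneq e 0; first by rewrite size_poly0.
have q0 : q != 0 by rewrite -size_poly_eq0 sq.
by move: he; rewrite size_mul // sq addSn /= leq_add2l.
Qed.

Lemma leads_XaddC (a : R) : leads ('X + a%:P) 1 1.
Proof. by rewrite /leads scale1r expr1 addrC addKr size_polyC leq_b1. Qed.

Lemma leads_comp p c k (a : R) : leads p c k -> leads (p \Po ('X + a%:P)) c k.
Proof.
move=> h.
have hX n : leads (('X + a%:P) ^+ n) 1 n.
  elim: n => [|n IH]; first by rewrite /leads expr0 scale1r subrr size_poly0.
  by rewrite exprS -[1]mul1r -add1n; apply: leadsM IH; exact: leads_XaddC.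
have -> : p \Po ('X + a%:P) = (p - c *: 'X^k) \Po ('X + a%:P) + c *: ('X + a%:P) ^+ k.
  by rewrite comp_polyB comp_polyZ comp_Xn_poly subrK.
have h0 : leads ((p - c *: 'X^k) \Po ('X + a%:P)) 0 k.
  by rewrite /leads scale0r subr0 size_comp_poly2 ?size_XaddC.
by have := leadsD h0 (leadsZ c (hX k)); rewrite add0r mulr1.
Qed.

Definition rootsP k (c : 'I_k -> R) (s : R) : {poly R} :=
  \prod_(j < k) ('X + (s - c j)%:P).

Lemma rootsPE k (c : 'I_k -> R) s l : (rootsP c s).[l] = \prod_(j < k) (l + s - c j).
Proof.
by rewrite horner_prod; apply: eq_bigr => j _; rewrite hornerD hornerX hornerC addrA.
Qed.

Lemma leads_rootsP k (c : 'I_k -> R) s : leads (rootsP c s) 1 k.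
Proof.
elim: k c => [|k IH] c; first by rewrite /rootsP big_ord0 /leads expr0 scale1r subrr size_poly0.
rewrite /rootsP big_ord_recr /=.
have := leadsM (IH (c \o widen_ord (leqnSn k))) (leads_XaddC (s - c ord_max)).
by rewrite mulr1 addn1.
Qed.

Lemma rootsP_dvd k (c : 'I_k -> R) p :
  injective c -> (forall j, p.[c j] = 0) -> rootsP c 0 %| p.
Proof.
move=> c_inj p_c.
have -> : rootsP c 0 = \prod_(z <- map c (index_enum 'I_k)) ('X - z%:P).
  by rewrite /rootsP big_map; apply: eq_bigr => j _; rewrite sub0r polyCN.
apply: uniq_roots_dvdp; first by apply/allP => y /mapP [j _ ->]; rewrite /root p_c.
by rewrite uniq_rootsE map_inj_uniq // index_enum_uniq.
Qed.

End LeadingTerm.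

Section Interpolation.
Variable R : fieldType.
Variables (N : nat) (xi : 'I_N -> R).
Hypothesis xi_inj : injective xi.

Definition lagrange (a : 'I_N) : {poly R} :=
  \prod_(b < N | b != a) ((xi a - xi b)^-1 *: ('X - (xi b)%:P)).

Lemma lagrangeE a l :
  (lagrange a).[l] = \prod_(b < N | b != a) ((l - xi b) / (xi a - xi b)).
Proof.
rewrite horner_prod; apply: eq_bigr => b _.
by rewrite hornerZ hornerD hornerN hornerX hornerC mulrC.
Qed.

Lemma lagrange_xi a c : (lagrange a).[xi c] = (a == c)%:R.
Proof.
rewrite lagrangeE; have [<-|ac] := eqVneq a c.
  by rewrite big1 // => b ba; rewrite divff // subr_eq0 (inj_eq xi_inj) eq_sym.
by rewrite (bigD1 c) 1?eq_sym //= subrr !mul0r.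
Qed.

Lemma size_lagrange a : (size (lagrange a) <= N)%N.
Proof.
rewrite /lagrange scaler_prod; apply: leq_trans (size_scale_leq _ _) _.
rewrite size_prod => [|b _]; last by rewrite polyXsubC_eq0.
rewrite (eq_bigr (fun _ => 2%N)) => [|b _]; last by rewrite size_XsubC.
rewrite sum_nat_const cardC1 card_ord; case: N a => [[]//|n _] /=; lia.
Qed.

Lemma lagrange_interp P T : leads P T N -> forall l,
  P.[l] = T * \prod_(n < N) (l - xi n) +
          \sum_(a < N) (\prod_(b < N | b != a) ((l - xi b) / (xi a - xi b))) * P.[xi a].
Proof.
move=> hP.
pose Z := P - T *: rootsP xi 0 - \sum_(a < N) P.[xi a] *: lagrange a.
have sZ : (size Z <= N)%N.
  apply: leq_trans (size_polyD _ _) _; rewrite geq_max; apply/andP; split.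
    have := leadsB hP (leadsZ T (leads_rootsP xi 0)).
    by rewrite mulr1 subrr /leads scale0r subr0.
  rewrite size_polyN; apply: leq_trans (size_sum _ _ _) _.
  apply/bigmax_leqP => a _; apply: leq_trans (size_scale_leq _ _) _.
  exact: size_lagrange.
have Z_xi c : Z.[xi c] = 0.
  rewrite !hornerE horner_sum rootsPE (bigD1 c) //= addr0 subrr mul0r mulr0 subr0.
  rewrite (bigD1 c) //= big1 => [|a ac]; last by rewrite hornerZ lagrange_xi (negbTE ac) mulr0.
  by rewrite hornerZ lagrange_xi eqxx mulr1 addr0 subrr.
have Z0 : Z = 0.
  apply/eqP; apply: contraT => nz.
  have := @max_poly_roots _ Z (map xi (enum 'I_N)) nz.
  rewrite size_map size_enum_ord ltnNge sZ; apply => //.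
    by apply/allP => y /mapP [c _ ->]; rewrite /root Z_xi.
  by rewrite map_inj_uniq // enum_uniq.
move=> l; move/(congr1 (horner^~ l))/eqP: Z0.
rewrite !hornerE horner_sum rootsPE subr_eq0 subr_eq => /eqP ->.
rewrite addrC; congr (_ * _ + _); first by apply: eq_bigr => n _; rewrite addr0.
by apply: eq_bigr => a _; rewrite hornerZ lagrangeE mulrC.
Qed.

End Interpolation.

Section Determinants.
Variable R : fieldType.

Lemma det_mx2 (A : 'M[R]_2) : \det A = A 0 0 * A 1 1 - A 0 1 * A 1 0.
Proof.
rewrite (expand_det_row _ 0) !big_ord_recl big_ord0 addr0 /cofactor !det_mx11 /=.
rewrite !mxE /= expr0 expr1 mul1r mulN1r mulrN.
by congr (A _ _ * A _ _ - A _ _ * A _ _); apply: val_inj.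
Qed.

Lemma det_proportional_rows n (A : 'M[R]_n) i1 i2 (u v : R) (s : 'I_n -> R) :
  i1 != i2 -> (forall j, A i1 j = u * s j) -> (forall j, A i2 j = v * s j) ->
  \det A = 0.
Proof.
move=> i12 row1 row2; have [u0|u0] := eqVneq u 0.
  by rewrite (expand_det_row _ i1) big1 // => j _; rewrite row1 u0 !mul0r.
pose B := \matrix_(i, j) if i == i2 then A i1 j else A i j.
have detB : \det B = 0.
  by apply: (determinant_alternate i12) => j; rewrite !mxE eqxx (negbTE i12).
have := @determinant_multilinear _ _ A B B i2 (v / u) 0.
rewrite detB mulr0 mul0r addr0; apply.
- by apply/rowP => j; rewrite !mxE eqxx row2 row1 mul0r addr0 mulrA mulfVK.
- by apply/matrixP => i j; rewrite !mxE eq_sym (negbTE (neq_lift _ _)).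
- by apply/matrixP => i j; rewrite !mxE eq_sym (negbTE (neq_lift _ _)).
Qed.

End Determinants.

Section BetheSolution.
Variable R : numClosedFieldType.
Variables (N : nat) (xi : 'I_N -> R) (eta k1 k2 k3 : R).
Variables (L M : nat) (lam : 'I_L -> R) (mu : 'I_M -> R).

Local Notation d := (dfun xi).
Local Notation Q1 := (Qpol lam).
Local Notation Q2 := (Qpol mu).

Lemma rootsP_Qpol k (c : 'I_k -> R) s l : (rootsP c s).[l] = Qpol c (l + s).
Proof. exact: rootsPE. Qed.

Lemma Qpol_root k (c : 'I_k -> R) j : Qpol c (c j) = 0.
Proof. by rewrite /Qpol (bigD1 j) //= subrr mul0r. Qed.

Lemma Qpol_neq0 k (c : 'I_k -> R) l : (forall j, l != c j) -> Qpol c l != 0.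
Proof. by move=> c_l; apply/prodf_neq0 => j _; rewrite subr_eq0 c_l. Qed.

Lemma divp_rootsPE k (c : 'I_k -> R) p l :
  rootsP c 0 %| p -> (p %/ rootsP c 0).[l] * Qpol c l = p.[l].
Proof. by move/divpK => {2}<-; rewrite hornerM rootsP_Qpol addr0. Qed.

Hypothesis eta_neq0 : eta != 0.
Hypothesis xi_generic :
  forall (a b : 'I_N) (r : int), a != b -> xi a - xi b != r%:~R * eta.
Hypothesis k1_neq0 : k1 != 0.
Hypothesis bethe_lam : forall j : 'I_L,
  k1 * Q2 (lam j) * afun xi eta (lam j) = k2 * d (lam j) * Q2 (lam j + eta).
Hypothesis bethe_mu : forall j : 'I_M,
  k2 * Q2 (mu j + eta) * Q1 (mu j - eta) = - (k3 * Q2 (mu j - eta) * Q1 (mu j)).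
Hypothesis lam_inj : injective lam.
Hypothesis mu_inj : injective mu.
Hypothesis mu_lam : forall (q : 'I_M) (m : 'I_L), mu q != lam m.
Hypothesis mu_xi : forall (h : 'I_M) (n : 'I_N), mu h != xi n.

Lemma xi_inj : injective xi.
Proof.
move=> a b xi_ab; apply/eqP; apply: contraT => ab.
by have := xi_generic 0 ab; rewrite xi_ab subrr mul0r eqxx.
Qed.

Lemma d_xi a : d (xi a) = 0.
Proof. exact: Qpol_root. Qed.

(* d does not vanish on the shifted nodes xi_a + r eta, r > 0: this is what makes
   the denominators of f^(m)_a invertible. *)
Lemma d_xi_shift a (r : nat) : (0 < r)%N -> d (xi a + r%:R * eta) != 0.
Proof.
move=> r_gt0; apply/prodf_neq0 => b _.
have [<-|ab] := eqVneq a b; first by rewrite addrC addKr mulf_neq0 // pnatr_eq0 -lt0n.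
apply: contra (xi_generic (- (r%:Z)) ab) => /eqP shift0; apply/eqP.
by rewrite intrN mulNr -(subr0 (xi a - xi b)) -shift0; ring.
Qed.

Lemma Q2_xi a : Q2 (xi a) != 0.
Proof. by apply: Qpol_neq0 => j; rewrite eq_sym mu_xi. Qed.

Lemma Q2_lam j : Q2 (lam j) != 0.
Proof. by apply: Qpol_neq0 => q; rewrite eq_sym mu_lam. Qed.

Lemma Q1_mu q : Q1 (mu q) != 0.
Proof. by apply: Qpol_neq0 => j; rewrite mu_lam. Qed.

(* A Bethe root lam_j = xi_a would force k1 Q2(xi_a) d(xi_a + eta) = 0. *)
Lemma Q1_xi a : Q1 (xi a) != 0.
Proof.
apply: Qpol_neq0 => j; apply/eqP => xi_lam.
have := bethe_lam j; rewrite -xi_lam d_xi mulr0 mul0r => /eqP.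
have := d_xi_shift a (r := 1) isT; rewrite mul1r /afun => d_a_neq0.
by rewrite !mulf_eq0 (negbTE k1_neq0) (negbTE (Q2_xi a)) (negbTE d_a_neq0).
Qed.

Lemma Q2_lam_shift j : Q2 (lam j + eta) != 0.
Proof.
apply: Qpol_neq0 => q; apply/eqP => lam_mu.
have := bethe_lam j; rewrite lam_mu Qpol_root mulr0 => /eqP.
rewrite !mulf_eq0 (negbTE k1_neq0) (negbTE (Q2_lam j)) /= /afun lam_mu.
by case/prodf_eq0 => n _; rewrite subr_eq0 (negbTE (mu_xi q n)).
Qed.

(* S(l) = k1 d(l + eta) Q2(l) - k2 d(l) Q2(l + eta); the first Bethe equations say
   that Q1 divides S.  U := S / Q1. *)
Definition SP : {poly R} :=
  k1 *: (rootsP xi eta * rootsP mu 0) - k2 *: (rootsP xi 0 * rootsP mu eta).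

Lemma SPE l : SP.[l] = k1 * d (l + eta) * Q2 l - k2 * d l * Q2 (l + eta).
Proof. by rewrite !(hornerE, rootsP_Qpol) ?addr0. Qed.

Lemma Q1_dvd_SP : rootsP lam 0 %| SP.
Proof.
apply: rootsP_dvd => // j.
by rewrite SPE mulrAC; have := bethe_lam j; rewrite /afun => ->; rewrite subrr.
Qed.

Definition UP : {poly R} := SP %/ rootsP lam 0.

Lemma UPE l : UP.[l] * Q1 l = SP.[l].
Proof. exact: divp_rootsPE Q1_dvd_SP. Qed.

(* V := (Q1(l - eta) U(l) - k3 d(l) Q2(l - eta)) / Q2(l); the division is exact by
   the second Bethe equations, and V is the polynomial form of t1(l|lam,mu). *)
Definition VnumP : {poly R} :=
  rootsP lam (- eta) * UP - k3 *: (rootsP xi 0 * rootsP mu (- eta)).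

Lemma VnumPE l : VnumP.[l] = Q1 (l - eta) * UP.[l] - k3 * (d l * Q2 (l - eta)).
Proof. by rewrite !(hornerE, rootsP_Qpol) ?addr0. Qed.

Lemma Q2_dvd_VnumP : rootsP mu 0 %| VnumP.
Proof.
apply: rootsP_dvd => // q; apply/eqP.
rewrite -(mulIr_eq0 _ (mulIf (Q1_mu q))) VnumPE.
have U_mu := UPE (mu q); rewrite SPE Qpol_root mulr0 sub0r in U_mu.
have -> : (Q1 (mu q - eta) * UP.[mu q] - k3 * (d (mu q) * Q2 (mu q - eta))) * Q1 (mu q)
   = Q1 (mu q - eta) * (UP.[mu q] * Q1 (mu q)) - k3 * d (mu q) * Q2 (mu q - eta) * Q1 (mu q)
  by ring.
rewrite U_mu.
have -> : Q1 (mu q - eta) * - (k2 * d (mu q) * Q2 (mu q + eta))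
    - k3 * d (mu q) * Q2 (mu q - eta) * Q1 (mu q)
  = - d (mu q) * (k2 * Q2 (mu q + eta) * Q1 (mu q - eta) + k3 * Q2 (mu q - eta) * Q1 (mu q))
  by ring.
by rewrite bethe_mu addNr mulr0.
Qed.

Definition VP : {poly R} := VnumP %/ rootsP mu 0.

Lemma VPE l : VP.[l] * Q2 l = VnumP.[l].
Proof. exact: divp_rootsPE Q2_dvd_VnumP. Qed.

Lemma VP_Q1Q2 l : VP.[l] * Q1 l * Q2 l =
  k1 * d (l + eta) * Q1 (l - eta) * Q2 l - k2 * d l * Q1 (l - eta) * Q2 (l + eta)
  - k3 * d l * Q2 (l - eta) * Q1 l.
Proof.
by rewrite mulrAC VPE VnumPE mulrBl -(mulrA _ UP.[l]) UPE SPE; ring.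
Qed.

Lemma t1Bethe_VP l : Q1 l != 0 -> Q2 l != 0 -> t1Bethe xi eta k1 k2 k3 lam mu l = VP.[l].
Proof.
move=> Q1l Q2l; apply: (mulIf Q1l); apply: (mulIf Q2l).
by rewrite VP_Q1Q2 /t1Bethe /afun; field; rewrite Q1l Q2l.
Qed.

(* At a node only Lambda_1 survives: t1(xi_a) = k1 a(xi_a) Q1(xi_a - eta) / Q1(xi_a). *)
Lemma VP_xi a : VP.[xi a] * Q1 (xi a) = k1 * d (xi a + eta) * Q1 (xi a - eta).
Proof.
apply: (mulIf (Q2_xi a)); rewrite VP_Q1Q2 d_xi; ring.
Qed.

Lemma t1Bethe_xi a : t1Bethe xi eta k1 k2 k3 lam mu (xi a) = VP.[xi a].
Proof. exact: t1Bethe_VP (Q1_xi a) (Q2_xi a). Qed.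

(* W(l) := (k1 V(l + eta) + k2 k3 d(l)) / Q1(l); exactness again uses the first Bethe
   equations, together with V(lam_j + eta) Q2(lam_j + eta) = -k3 d(lam_j + eta) Q2(lam_j). *)
Definition WnumP : {poly R} :=
  k1 *: (VP \Po ('X + eta%:P)) + (k2 * k3) *: rootsP xi 0.

Lemma WnumPE l : WnumP.[l] = k1 * VP.[l + eta] + k2 * k3 * d l.
Proof. by rewrite !(hornerE, horner_comp, rootsP_Qpol). Qed.

Lemma Q1_dvd_WnumP : rootsP lam 0 %| WnumP.
Proof.
apply: rootsP_dvd => // j; apply/eqP.
rewrite -(mulIr_eq0 _ (mulIf (Q2_lam_shift j))) WnumPE.
have V_lam := VPE (lam j + eta); rewrite VnumPE !addrK Qpol_root mul0r sub0r in V_lam.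
have -> : (k1 * VP.[lam j + eta] + k2 * k3 * d (lam j)) * Q2 (lam j + eta) =
    k1 * (VP.[lam j + eta] * Q2 (lam j + eta)) + k3 * (k2 * d (lam j) * Q2 (lam j + eta))
  by ring.
by rewrite V_lam -bethe_lam /afun; apply/eqP; ring.
Qed.

Definition WP : {poly R} := WnumP %/ rootsP lam 0.

Lemma WP_Q1 l : WP.[l] * Q1 l = k1 * VP.[l + eta] + k2 * k3 * d l.
Proof. by rewrite divp_rootsPE ?WnumPE // Q1_dvd_WnumP. Qed.

Local Notation Tinf := (Tinf k1 k2 k3).

Lemma leads_SP : leads SP (k1 - k2) (N + M).
Proof.
have := leadsB (leadsZ k1 (leadsM (leads_rootsP xi eta) (leads_rootsP mu 0)))
               (leadsZ k2 (leadsM (leads_rootsP xi 0) (leads_rootsP mu eta))).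
by rewrite !mulr1.
Qed.

(* V ~ (k1 - k2 - k3) X^N, read off from Q1 Q2 V. *)
Lemma leads_VP : leads VP (Tinf 1) N.
Proof.
have Q1Q2 : leads (rootsP lam 0 * rootsP mu 0) 1 (L + M).
  by rewrite -[1]mulr1; apply: leadsM; exact: leads_rootsP.
have Q1Q2V : rootsP lam 0 * rootsP mu 0 * VP =
    rootsP lam (- eta) * SP - k3 *: (rootsP lam 0 * (rootsP xi 0 * rootsP mu (- eta))).
  rewrite -mulrA [rootsP mu 0 * VP]mulrC divpK ?Q2_dvd_VnumP //.
  rewrite -(divpK Q1_dvd_SP) /VnumP mulrBr -scalerAr; congr (_ - _); ring.
have := leadsB (leadsM (leads_rootsP lam (- eta)) leads_SP)
  (leadsZ k3 (leadsM (leads_rootsP lam 0) (leadsM (leads_rootsP xi 0) (leads_rootsP mu (- eta))))).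
rewrite -Q1Q2V !mulr1 !mul1r addnCA addnC.
by move/(leads_cancel (oner_neq0 _))/(_ Q1Q2); rewrite divr1.
Qed.

(* The reduced polynomials G_n: G_0 = 1, G_1 = V and
   G_(n+2)(l) = k1^n Q1(l - eta) W(l + n eta).  We show t_n(l) = prod_(1<=r<n) d(l + r eta) G_n(l). *)
Definition G (n : nat) : {poly R} :=
  match n with
  | 0 => 1
  | 1 => VP
  | n'.+2 => k1 ^+ n' *: (rootsP lam (- eta) * (WP \Po ('X + (n'%:R * eta)%:P)))
  end.

Lemma GE n l : (G n.+2).[l] = k1 ^+ n * (Q1 (l - eta) * WP.[l + n%:R * eta]).
Proof. by rewrite /= hornerZ hornerM rootsP_Qpol horner_comp !hornerE. Qed.

Lemma leads_G n : leads (G n.+1) (Tinf n.+1) N.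
Proof.
case: n => [|n]; first exact: leads_VP.
set s := n%:R * eta.
have Q1s : leads (rootsP lam 0 \Po ('X + s%:P)) 1 L := leads_comp s (leads_rootsP lam 0).
have Ws : leads (WnumP \Po ('X + s%:P)) (k1 * Tinf 1 + k2 * k3 * 1) N.
  apply/leads_comp/leadsD; apply: leadsZ; last exact: leads_rootsP.
  exact: leads_comp leads_VP.
have Q1sG : (rootsP lam 0 \Po ('X + s%:P)) * G n.+2 =
    k1 ^+ n *: (rootsP lam (- eta) * (WnumP \Po ('X + s%:P))).
  by rewrite /= -(divpK Q1_dvd_WnumP) comp_polyM -scalerAr; congr (_ *: _); ring.
have := leadsZ (k1 ^+ n) (leadsM (leads_rootsP lam (- eta)) Ws).
rewrite -Q1sG => /(leads_cancel (oner_neq0 _))/(_ Q1s); rewrite divr1.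
suff -> : k1 ^+ n * (1 * (k1 * Tinf 1 + k2 * k3 * 1)) = Tinf n.+2 by [].
by rewrite /=; ring.
Qed.

Definition tclosed (n : nat) (l : R) : R :=
  \prod_(1 <= r < n) d (l + r%:R * eta) * (G n).[l].

(* Recursion of the G_n at the shifted nodes, from V(xi_a) Q1(xi_a) = k1 d(xi_a + eta) Q1(xi_a - eta)
   and W(xi_a) Q1(xi_a) = k1 V(xi_a + eta). *)
Lemma G_step n a :
  (G n.+1).[xi a + eta] * VP.[xi a] = d (xi a + eta) * (G n.+2).[xi a].
Proof.
apply: (mulIf (Q1_xi a)); rewrite -mulrA VP_xi.
case: n => [|n]; rewrite !GE.
  have W_xi := WP_Q1 (xi a); rewrite d_xi mulr0 addr0 in W_xi.
  by rewrite mul0r addr0 -!mulrA W_xi; ring.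
have -> : xi a + eta + n%:R * eta = xi a + n.+1%:R * eta by ring.
by rewrite addrK exprS; ring.
Qed.

Lemma tclosed_step n a : tclosed n (xi a + eta) * VP.[xi a] =
  \prod_(1 <= r < n.+1) d (xi a + r%:R * eta) * (G n.+1).[xi a].
Proof.
rewrite /tclosed; case: n => [|n]; first by rewrite !big_geq //= hornerC !mul1r.
rewrite -mulrA G_step [in RHS]big_nat_recl // mul1r mulrA [_ * d _]mulrC; congr (_ * _ * _).
by apply: eq_bigr => r _; rewrite -addrA; congr (d (_ + _)); ring.
Qed.

Lemma ffun_const a m :
  \prod_(b < N) \prod_(1 <= r < m) (xi a - xi b + r%:R * eta)^-1 =
  (\prod_(1 <= r < m) d (xi a + r%:R * eta))^-1.
Proof.
rewrite exchange_big /= -prodfV; apply: eq_bigr => r _.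
by rewrite prodfV; congr (_^-1); apply: eq_bigr => b _; ring.
Qed.

Lemma prod_d_xi_shift_neq0 a m : \prod_(1 <= r < m) d (xi a + r%:R * eta) != 0.
Proof.
rewrite prodf_seq_neq0; apply/allP => r; rewrite mem_index_iota => /andP [r_gt0 _].
exact: d_xi_shift.
Qed.

Local Notation x := (fun a : 'I_N => t1Bethe xi eta k1 k2 k3 lam mu (xi a)).
Local Notation t := (tpol xi eta k1 k2 k3 x).

(* Main identity: t_n(l) = prod_(1<=r<n) d(l + r eta) G_n(l), by induction on n, using that
   G_(n+1) ~ T_{infty,n+1} X^N is determined by its values at the nodes. *)
Lemma tpol_closed n l : t n l = tclosed n l.
Proof.
elim: n l => [|n IH] l; first by rewrite /tclosed big_geq //= hornerC mul1r.
rewrite /tclosed /=; congr (_ * _).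
rewrite (lagrange_interp xi_inj (leads_G n) l); congr (_ + _).
apply: eq_bigr => a _; rewrite /ffun -!mulrA; congr (_ * _).
rewrite ffun_const IH t1Bethe_xi tclosed_step mulKf //.
exact: prod_d_xi_shift_neq0.
Qed.

(* Two consecutive rows of the fused matrix share the factor [tail]. *)
Definition tail (k : nat) (m : R) : R :=
  \prod_(1 <= r < k.+2) d (m + r%:R * eta) * k1 ^+ k * WP.[m + k%:R * eta].

Lemma tclosed_tail k m : tclosed k.+2 m = Q1 (m - eta) * tail k m.
Proof. by rewrite /tclosed GE /tail; ring. Qed.

Lemma tclosed_tail_shift k m :
  tclosed k.+3 (m - eta) = k1 * d m * Q1 (m - eta - eta) * tail k m.
Proof.
rewrite /tclosed GE /tail big_nat_recl // mul1r subrK.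
have -> : \prod_(1 <= i < k.+2) d (m - eta + i.+1%:R * eta) =
          \prod_(1 <= r < k.+2) d (m + r%:R * eta).
  by apply: eq_bigr => r _; congr (d _); ring.
have -> : m - eta + k.+1%:R * eta = m + k%:R * eta by ring.
by rewrite exprS; ring.
Qed.

(* Null out-boundary: rows n and n+1 of the (n+2) x (n+2) fused matrix are proportional. *)
Lemma out_boundary n m l : tfused xi eta k1 k2 k3 x (2 + n) (3 + m) l = 0.
Proof.
have rn : (n < 2 + n)%N by lia.
have rn1 : (n.+1 < 2 + n)%N by lia.
pose l0 := l - n%:R * eta.
apply: (@det_proportional_rows _ _ _ (Ordinal rn) (Ordinal rn1) (Q1 (l0 - eta))
   (k1 * d l0 * Q1 (l0 - eta - eta)) (fun j => tail (m + (n.+1 - j)) l0)).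
- by apply/eqP => -[] /n_Sn.
- move=> j; rewrite mxE /=.
  have -> : ((3 + m)%:Z + n%:Z - j%:Z)%R = Posz (m + (n.+1 - j)).+2.
    by have := ltn_ord j; lia.
  by rewrite /tpolZ tpol_closed tclosed_tail.
- move=> j; rewrite mxE /=.
  have -> : ((3 + m)%:Z + n.+1%:Z - j%:Z)%R = Posz (m + (n.+1 - j)).+3.
    by have := ltn_ord j; lia.
  have -> : l - n.+1%:R * eta = l0 - eta by rewrite /l0; ring.
  by rewrite /tpolZ tpol_closed tclosed_tail_shift.
Qed.

Lemma tfused22 l : tfused xi eta k1 k2 k3 x 2 2 (l + eta) =
  t 2 l * t 2 (l + eta) - t 3 l * t 1 (l + eta).
Proof.
have ord0 : nat_of_ord (0 : 'I_2) = 0%N by [].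
have ord1 : nat_of_ord (1 : 'I_2) = 1%N by [].
rewrite /tfused det_mx2 !mxE ord0 ord1 mul0r mul1r subr0 addrK.
rewrite (_ : (2%:Z + 0%:Z - 0%:Z)%R = 2%:Z) // subr0 addrK.
rewrite (_ : (2%:Z - 1%:Z)%R = 1%:Z) // (_ : (2%:Z + 1%:Z - 0%:Z)%R = 3%:Z) //.
by rewrite /tpolZ mulrC [t 3 l * _]mulrC.
Qed.

Lemma tclosed1 l : tclosed 1 l = VP.[l].
Proof. by rewrite /tclosed big_geq // mul1r. Qed.

Lemma tclosed2 l : tclosed 2 l = d (l + eta) * Q1 (l - eta) * WP.[l].
Proof. by rewrite /tclosed GE big_nat1 expr0 mul0r addr0 !mul1r mulrA. Qed.

Lemma tclosed3 l :
  tclosed 3 l = k1 * d (l + eta) * d (l + eta + eta) * Q1 (l - eta) * WP.[l + eta].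
Proof.
rewrite /tclosed GE big_ltn // big_nat1 expr1 mul1r.
have -> : l + 2%:R * eta = l + eta + eta by ring.
ring.
Qed.

(* Inner boundary, from the closed forms of t_1, t_2, t_3 and W Q1 = k1 V(. + eta) + k2 k3 d. *)
Lemma inner_boundary l :
  k2 * k3 * d l * t 3 l = k1 * (t 2 l * t 2 (l + eta) - t 3 l * t 1 (l + eta)).
Proof.
rewrite !tpol_closed tclosed1 !tclosed2 tclosed3 addrK.
have -> : k2 * k3 * d l = WP.[l] * Q1 l - k1 * VP.[l + eta] by rewrite WP_Q1; ring.
ring.
Qed.

End BetheSolution.

Theorem lemmaA2 (R : numClosedFieldType) (N : nat) (xi : 'I_N -> R) (eta : R)
    (k1 k2 k3 : R) (L M : nat) (lam : 'I_L -> R) (mu : 'I_M -> R) :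
  (0 < N)%N ->
  eta != 0 ->
  (forall (a b : 'I_N) (r : int), a != b -> xi a - xi b != r%:~R * eta) ->
  k1 != 0 -> k2 != 0 -> k3 != 0 ->
  bethe_eqs xi eta k1 k2 k3 lam mu ->
  injective lam -> injective mu ->
  (forall (q : 'I_M) (m : 'I_L), mu q != lam m) ->
  (forall (h : 'I_M) (n : 'I_N), mu h != xi n) ->
  let x := fun a : 'I_N => t1Bethe xi eta k1 k2 k3 lam mu (xi a) in
  (forall (n m : nat) (l : R),
      tfused xi eta k1 k2 k3 x (2 + n) (3 + m) l = 0) /\
  (forall l : R,
      k2 * k3 * dfun xi l * tpol xi eta k1 k2 k3 x 3 l
      = k1 * tfused xi eta k1 k2 k3 x 2 2 (l + eta)) /\
  (forall l : R,
      k2 * k3 * dfun xi l * tpol xi eta k1 k2 k3 x 3 l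
      = k1 * (tpol xi eta k1 k2 k3 x 2 l * tpol xi eta k1 k2 k3 x 2 (l + eta)
              - tpol xi eta k1 k2 k3 x 3 l * tpol xi eta k1 k2 k3 x 1 (l + eta))).
Proof.
move=> _ eta0 xi_gen k1_0 _ _ [b_lam b_mu] lam_inj mu_inj mu_lam mu_xi x.
have inner := inner_boundary eta0 xi_gen k1_0 b_lam b_mu lam_inj mu_inj mu_lam mu_xi.
split; first exact: out_boundary eta0 xi_gen k1_0 b_lam b_mu lam_inj mu_inj mu_lam mu_xi.
by split=> l; rewrite inner // tfused22.
Qed.
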